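(* Let $\sigma:\mathbb{Z}'\to[0,1]$ with $\sum_{l\in\mathbb{Z}',\,l<0}\sigma(l)<\infty$, and let $s\in\mathbb{Z}'$ be such that $Q^0_\sigma(s):=\prod_{i=1}^{\infty}\bigl(1-\sigma(-i-s)\bigr)>0$. Then there exist $L_*=L_*(s)>0$ and $c=c(s)>0$ such that $\|\mathsf D\|\le cL$ for $0\le L<L_*$, where $\|\mathsf D\|$ is the operator norm of $\mathsf D$ (depending on $L$).
   Context: $\mathbb{Z}'=\mathbb{Z}+\tfrac12$, $\mathbb{Z}'_+=\mathbb{Z}'\cap(0,\infty)$; $\mathrm{J}_k$ is the Bessel function of the first kind. For $L\ge0$ let $K^{\mathsf{Be}}(a,a)=\sum_{l\in\mathbb{Z}'_+}\mathrm{J}_{a+l}(2L)^2$ and $M_s(a,a)=\sigma(a-s-\tfrac12)K^{\mathsf{Be}}(a,a)$. Let $\widehat{\mathbf f}(a)=\sigma(a-s-\tfrac12)\,(\mathrm{J}_{a-\frac12}(2L),\,L\mathrm{J}_{a+\frac12}(2L))^\top$ and $\widehat{\mathbf g}(a)=\frac{1}{1-M_s(a,a)}(L\mathrm{J}_{a+\frac12}(2L),\,-\mathrm{J}_{a-\frac12}(2L))^\top$. The operator $\mathsf D$ on $\ell^2(\mathbb{Z}')\otimes\mathbb{C}^2$ is $(\mathsf D\mathbf r)(a)=\sum_{b\in\mathbb{Z}'\setminus\{a\}}\frac{\mathbf r(b)\,\widehat{\mathbf g}(b)^\top\widehat{\mathbf f}(a)}{a-b}$, $a\in\mathbb{Z}'$;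 the norm on $\ell^2(\mathbb{Z}')\otimes\mathbb{C}^2$ is induced by the standard norm on $\ell^2(\mathbb{Z}')$ and the Euclidean norm on $\mathbb{C}^2$. *)

From Stdlib Require Import Reals ZArith.
From Coquelicot Require Import Coquelicot.
Open Scope R_scope.

(* ---------- Coding of Z' = Z + 1/2 ----------
   An element x of Z' is coded by the integer n with x = n + 1/2.
   So a function on Z' is a function Z -> _ (its value at code n is its value
   at n + 1/2).  For a = k+1/2, b = m+1/2 we have a - b = k - m,
   a - 1/2 = k, a + 1/2 = k + 1; for l = j + 1/2 in Z'_+ (j : nat),
   a + l = k + j + 1. *)
Definition halfint (n : Z) : R := IZR n + /2.

Definition BesselJnat (n : nat) (x : R) : R :=
  Series (fun m : nat =>
    (-1) ^ m / (INR (fact m) * INR (fact (m + n))) * (x / 2) ^ (2 * m + n)).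

Definition BesselJ (n : Z) (x : R) : R :=
  match n with
  | Z0 => BesselJnat 0 x
  | Zpos p => BesselJnat (Pos.to_nat p) x
  | Zneg p => (-1) ^ (Pos.to_nat p) * BesselJnat (Pos.to_nat p) x
  end.

Definition KBe (L : R) (k : Z) : R :=
  Series (fun j : nat => (BesselJ (k + Z.of_nat j + 1) (2 * L)) ^ 2).

(* sigma(a - s - 1/2) with a = k+1/2, s = t+1/2: a - s - 1/2 = (k-t-1) + 1/2. *)
Definition sig_shift (sigma : Z -> R) (t k : Z) : R := sigma (k - t - 1)%Z.

Definition Ms (sigma : Z -> R) (t : Z) (L : R) (k : Z) : R :=
  sig_shift sigma t k * KBe L k.

Definition fhat (sigma : Z -> R) (t : Z) (L : R) (k : Z) : R * R :=
  (sig_shift sigma t k * BesselJ k (2 * L),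
   sig_shift sigma t k * (L * BesselJ (k + 1) (2 * L))).

Definition ghat (sigma : Z -> R) (t : Z) (L : R) (k : Z) : R * R :=
  (/ (1 - Ms sigma t L k) * (L * BesselJ (k + 1) (2 * L)),
   / (1 - Ms sigma t L k) * (- BesselJ k (2 * L))).

(* scalar kernel: (D r)(a) = sum_{b <> a} r(b) * (\hat g(b)^T \hat f(a)) / (a - b).
   Dker k m is the coefficient of r(b) for a = k+1/2, b = m+1/2 (0 on the diagonal). *)
Definition Dker (sigma : Z -> R) (t : Z) (L : R) (k m : Z) : R :=
  if Z.eqb k m then 0
  else (fst (ghat sigma t L m) * fst (fhat sigma t L k)
        + snd (ghat sigma t L m) * snd (fhat sigma t L k)) / IZR (k - m).

Definition sumZ (u : Z -> R) : R :=
  Series (fun n : nat => u (Z.of_nat n) + u (- Z.of_nat n - 1)%Z).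

Definition abs_summableZ (u : Z -> R) : Prop :=
  ex_series (fun n : nat => Rabs (u (Z.of_nat n)) + Rabs (u (- Z.of_nat n - 1)%Z)).

Definition vec := Z -> (C * C)%type.

Definition sqnorm_pt (v : C * C) : R := (Cmod (fst v)) ^ 2 + (Cmod (snd v)) ^ 2.

Definition in_l2 (r : vec) : Prop := abs_summableZ (fun n => sqnorm_pt (r n)).

Definition l2norm (r : vec) : R := sqrt (sumZ (fun n => sqnorm_pt (r n))).

Definition coord (i : nat) (v : C * C) : R :=
  match i with
  | 0%nat => Re (fst v) | 1%nat => Im (fst v)
  | 2%nat => Re (snd v) | _ => Im (snd v)
  end.

Definition applyK (K : Z -> Z -> R) (r : vec) (k : Z) : C * C :=
  let c i := sumZ (fun m => K k m * coord i (r m)) in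
  ((c 0%nat, c 1%nat), (c 2%nat, c 3%nat)).

(* "the operator with kernel K is a bounded operator on l^2(Z') (x) C^2 with
   operator norm <= Cst": for every r in l^2, each defining series converges
   absolutely, K r is in l^2, and ||K r|| <= Cst ||r||. *)
Definition opnorm_le (K : Z -> Z -> R) (Cst : R) : Prop :=
  forall r : vec, in_l2 r ->
    (forall (k : Z) (i : nat), (i < 4)%nat ->
        abs_summableZ (fun m => K k m * coord i (r m))) /\
    in_l2 (applyK K r) /\
    l2norm (applyK K r) <= Cst * l2norm r.

(* partial products prod_{i=1}^N (1 - sigma(-i - s)), with s = t + 1/2:
   -i - s = (-i - t - 1) + 1/2. *)
Fixpoint Q0partial (sigma : Z -> R) (t : Z) (N : nat) : R :=
  match N with
  | O => 1
  | S N' => Q0partial sigma t N' * (1 - sigma (- Z.of_nat N - t - 1)%Z)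
  end.

(* For L <= 1/2 the power series gives |J_n(2L)| <= 2 * 2^-|n|, so every entry of D is at most
   (const/eta) * L * 2^-|a| * 2^-|b| as soon as the denominators 1 - M_s(b,b) stay above eta/2,
   and a kernel dominated by such a product of summable weights is bounded on l^2.
   For b > 0 all Bessel orders in K^Be(b,b) are >= 1, so M_s(b,b) = O(L^2).  For b < 0 the
   factor sigma(b - s - 1/2) is evaluated at some l <= -s - 1, and there sigma <= 1 - eta:
   Q^0_sigma(s) > 0 forbids sigma(l) = 1 for a single such l, while summability forces
   sigma(l) -> 0 as l -> -oo. *)

From Stdlib Require Import Reals ZArith Lia Lra.
From Coquelicot Require Import Coquelicot.
Open Scope R_scope.

Lemma pow_le_pow_le_1 (y : R) (a b : nat) :
  0 <= y <= 1 -> (a <= b)%nat -> y ^ b <= y ^ a.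
Proof.
  intros Hy Hab. replace b with (a + (b - a))%nat by lia. rewrite pow_add.
  assert (y ^ (b - a) <= 1) by (rewrite <- (pow1 (b - a)); apply pow_incr; lra).
  assert (0 <= y ^ a) by (apply pow_le; lra).
  assert (0 <= y ^ (b - a)) by (apply pow_le; lra).
  nra.
Qed.

Lemma Rabs_mult_le (a b A B : R) : Rabs a <= A -> Rabs b <= B -> Rabs (a * b) <= A * B.
Proof. intros Ha Hb. rewrite Rabs_mult. apply Rmult_le_compat; auto using Rabs_pos. Qed.

Lemma INR_fact_ge_1 (n : nat) : 1 <= INR (fact n).
Proof. apply (le_INR 1). pose proof (lt_O_fact n). lia. Qed.

Lemma Series_dominated (a b : nat -> R) :
  (forall n, Rabs (a n) <= b n) -> ex_series b ->
  ex_series a /\ Rabs (Series a) <= Series b.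
Proof.
  intros Hab Hb.
  assert (Habs : ex_series (fun n => Rabs (a n))).
  { apply (@ex_series_le R_AbsRing R_CompleteNormedModule _ b); [|exact Hb].
    intros n. change (Rabs (Rabs (a n)) <= b n). rewrite Rabs_Rabsolu. apply Hab. }
  split; [now apply ex_series_Rabs|].
  eapply Rle_trans; [now apply Series_Rabs|].
  apply Series_le; [|exact Hb]. intros n. split; [apply Rabs_pos | apply Hab].
Qed.

Lemma Series_nonneg (a : nat -> R) :
  (forall n, 0 <= a n) -> ex_series a -> 0 <= Series a.
Proof.
  intros Ha Hex. rewrite <- (Rmult_0_l (Series a)), <- Series_scal_l.
  apply Series_le; [|exact Hex]. intros n. specialize (Ha n). lra.
Qed.

Lemma le_Series (a : nat -> R) (N : nat) :
  (forall n, 0 <= a n) -> ex_series a -> a N <= Series a.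
Proof.
  intros Ha Hex. rewrite (Series_incr_n a (S N)) by (auto; lia). simpl Init.Nat.pred.
  assert (0 <= Series (fun k => a (S N + k)%nat)).
  { apply Series_nonneg; [auto|]. now apply (ex_series_incr_n a (S N)). }
  assert (a N <= sum_f_R0 a N).
  { destruct N as [|N]; simpl; [lra|]. pose proof (cond_pos_sum a N Ha). lra. }
  lra.
Qed.

Lemma Series_pow_abs_shift_pos (x : R) (q : Z) : 0 <= x < 1 -> (1 <= q)%Z ->
  ex_series (fun j => x ^ Z.abs_nat (q + Z.of_nat j)) /\
  Series (fun j => x ^ Z.abs_nat (q + Z.of_nat j)) <= x / (1 - x).
Proof.
  intros Hx Hq. assert (Hgeom : Rabs x < 1) by (rewrite Rabs_pos_eq; lra).
  destruct (Series_dominated (fun j => x ^ Z.abs_nat (q + Z.of_nat j)) (fun j => x * x ^ j))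
    as [Hex Hle].
  - intros j. rewrite Rabs_pos_eq by (apply pow_le; lra).
    apply (pow_le_pow_le_1 x (S j)); [lra | lia].
  - exact (ex_series_scal_l x _ (ex_series_geom x Hgeom)).
  - split; [exact Hex|].
    rewrite Series_scal_l, Series_geom in Hle by exact Hgeom.
    pose proof (Rle_abs (Series (fun j => x ^ Z.abs_nat (q + Z.of_nat j)))). unfold Rdiv. lra.
Qed.

Lemma Series_pow_abs_shift (x : R) (q : Z) : 0 <= x < 1 ->
  ex_series (fun j => x ^ Z.abs_nat (q + Z.of_nat j)) /\
  Series (fun j => x ^ Z.abs_nat (q + Z.of_nat j)) <= (1 + x) / (1 - x).
Proof.
  intros Hx. assert (Hinv : (1 + x) / (1 - x) = / (1 - x) + x / (1 - x)) by (field; lra).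
  assert (0 <= / (1 - x)) by (apply Rlt_le, Rinv_0_lt_compat; lra).
  destruct (Z_le_gt_dec 1 q) as [Hq | Hq].
  { destruct (Series_pow_abs_shift_pos x q Hx Hq). split; [assumption | lra]. }
  set (a := fun j => x ^ Z.abs_nat (q + Z.of_nat j)).
  set (N := Z.to_nat (- q)).
  assert (Htail : forall k, a (S N + k)%nat = x ^ Z.abs_nat (1 + Z.of_nat k)).
  { intros k. unfold a. f_equal. unfold N. lia. }
  destruct (Series_pow_abs_shift_pos x 1 Hx ltac:(lia)) as [Hex1 Hle1].
  assert (Hex : ex_series a).
  { apply (ex_series_incr_n a (S N)). eapply ex_series_ext; [|exact Hex1].
    intros k. now rewrite Htail. }
  split; [exact Hex|]. change (Series a <= (1 + x) / (1 - x)).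
  rewrite (Series_incr_n a (S N)) by (auto; lia). simpl Init.Nat.pred.
  rewrite (Series_ext _ _ Htail).
  assert (Hhead : sum_f_R0 a N <= / (1 - x)).
  { rewrite <- sum_f_R0_skip, (sum_eq _ (fun i => x ^ i)).
    - rewrite tech3 by lra. unfold Rdiv.
      assert (0 <= x ^ S N) by (apply pow_le; lra).
      rewrite <- (Rmult_1_l (/ (1 - x))) at 2. apply Rmult_le_compat_r; lra.
    - intros i Hi. unfold a. f_equal. unfold N in *. lia. }
  lra.
Qed.

Lemma bounded_away_from_1 (u : nat -> R) :
  (forall n, u n < 1) -> is_lim_seq u 0 ->
  exists eta, 0 < eta <= 1 / 2 /\ forall n, u n <= 1 - eta.
Proof.
  intros Hlt Hlim.
  assert (Hfinite : forall N, exists e, 0 < e /\ forall n, (n < N)%nat -> u n <= 1 - e).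
  { induction N as [|N [e [He Hn]]].
    - exists 1. split; [lra | intros n Hn; lia].
    - exists (Rmin e (1 - u N)). pose proof (Hlt N).
      pose proof (Rmin_l e (1 - u N)). pose proof (Rmin_r e (1 - u N)).
      split; [apply Rmin_glb_lt; lra|].
      intros n Hn'. destruct (Nat.eq_dec n N) as [->|Hne]; [lra|].
      specialize (Hn n ltac:(lia)). lra. }
  apply is_lim_seq_spec in Hlim. destruct (Hlim (mkposreal (1 / 2) ltac:(lra))) as [N HN].
  destruct (Hfinite N) as [e [He Hn]].
  exists (Rmin e (1 / 2)). pose proof (Rmin_l e (1 / 2)). pose proof (Rmin_r e (1 / 2)).
  split; [split; [apply Rmin_glb_lt|]; lra|].
  intros n. destruct (le_lt_dec N n) as [HNn | HnN].
  - specialize (HN n HNn). simpl in HN. rewrite Rminus_0_r in HN.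
    pose proof (Rle_abs (u n)). lra.
  - specialize (Hn n HnN). lra.
Qed.

Lemma sumZ_dominated (u v : Z -> R) :
  (forall n, Rabs (u n) <= v n) -> abs_summableZ v ->
  abs_summableZ u /\ Rabs (sumZ u) <= sumZ v.
Proof.
  unfold abs_summableZ, sumZ. intros Huv Hv.
  assert (Hv0 : forall n, 0 <= v n) by (intros n; eapply Rle_trans; [apply Rabs_pos | apply Huv]).
  assert (Hvabs : forall n, Rabs (v n) = v n) by (intros n; apply Rabs_pos_eq, Hv0).
  assert (Hv' : ex_series (fun n => v (Z.of_nat n) + v (- Z.of_nat n - 1)%Z)).
  { eapply ex_series_ext; [|exact Hv]. intros n. cbv beta. now rewrite !Hvabs. }
  split.
  - destruct (Series_dominated (fun n => Rabs (u (Z.of_nat n)) + Rabs (u (- Z.of_nat n - 1)%Z))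
      (fun n => v (Z.of_nat n) + v (- Z.of_nat n - 1)%Z)) as [Hex _]; [|exact Hv'|exact Hex].
    intros n. rewrite Rabs_pos_eq by (pose proof (Rabs_pos (u (Z.of_nat n)));
      pose proof (Rabs_pos (u (- Z.of_nat n - 1)%Z)); lra).
    pose proof (Huv (Z.of_nat n)). pose proof (Huv (- Z.of_nat n - 1)%Z). lra.
  - apply Series_dominated; [|exact Hv'].
    intros n. eapply Rle_trans; [apply Rabs_triang|].
    pose proof (Huv (Z.of_nat n)). pose proof (Huv (- Z.of_nat n - 1)%Z). lra.
Qed.

Lemma sumZ_scal_l (c : R) (v : Z -> R) : abs_summableZ v ->
  abs_summableZ (fun n => c * v n) /\ sumZ (fun n => c * v n) = c * sumZ v.
Proof.
  unfold abs_summableZ, sumZ. intros Hv. split.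
  - eapply ex_series_ext; [|exact (ex_series_scal_l (Rabs c) _ Hv)].
    intros n. change (Rabs c * (Rabs (v (Z.of_nat n)) + Rabs (v (- Z.of_nat n - 1)%Z)) =
      Rabs (c * v (Z.of_nat n)) + Rabs (c * v (- Z.of_nat n - 1)%Z)).
    rewrite !Rabs_mult. ring.
  - rewrite <- Series_scal_l. apply Series_ext. intros n. ring.
Qed.

Lemma le_sumZ (u : Z -> R) (k : Z) :
  (forall n, 0 <= u n) -> abs_summableZ u -> u k <= sumZ u.
Proof.
  unfold abs_summableZ, sumZ. intros Hu Hex.
  assert (Hpair : forall n, 0 <= u (Z.of_nat n) + u (- Z.of_nat n - 1)%Z)
    by (intros n; apply Rplus_le_le_0_compat; apply Hu).
  assert (Hex' : ex_series (fun n => u (Z.of_nat n) + u (- Z.of_nat n - 1)%Z)).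
  { eapply ex_series_ext; [|exact Hex]. intros n. cbv beta. now rewrite !Rabs_pos_eq by apply Hu. }
  destruct (Z_le_gt_dec 0 k) as [Hk | Hk].
  - pose proof (le_Series _ (Z.to_nat k) Hpair Hex') as Hle. cbv beta in Hle.
    rewrite Z2Nat.id in Hle by exact Hk. pose proof (Hu (- k - 1)%Z). lra.
  - pose proof (le_Series _ (Z.to_nat (- k - 1)) Hpair Hex') as Hle. cbv beta in Hle.
    rewrite Z2Nat.id in Hle by lia. replace (- (- k - 1) - 1)%Z with k in Hle by ring.
    pose proof (Hu (- k - 1)%Z). lra.
Qed.

Definition weight (n : Z) : R := (1 / 2) ^ Z.abs_nat n.

Lemma weight_range (n : Z) : 0 <= weight n <= 1.
Proof.
  unfold weight. split; [apply pow_le; lra|].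
  apply (pow_le_pow_le_1 (1 / 2) 0); [lra | lia].
Qed.

Lemma weight_succ_le (n : Z) : weight (n + 1) <= 2 * weight n.
Proof.
  unfold weight.
  pose proof (pow_le_pow_le_1 (1 / 2) (Z.abs_nat n) (S (Z.abs_nat (n + 1))) ltac:(lra) ltac:(lia))
    as Hle.
  simpl in Hle. lra.
Qed.

Lemma sumZ_weight : abs_summableZ weight /\ sumZ weight = 3.
Proof.
  assert (Hgeom : Rabs (1 / 2) < 1) by (rewrite Rabs_pos_eq; lra).
  assert (Hpair : forall n, weight (Z.of_nat n) + weight (- Z.of_nat n - 1)%Z = 3 / 2 * (1 / 2) ^ n).
  { intros n. unfold weight.
    replace (Z.abs_nat (Z.of_nat n)) with n by lia.
    replace (Z.abs_nat (- Z.of_nat n - 1)) with (S n) by lia. simpl. field. }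
  unfold abs_summableZ, sumZ. split.
  - eapply ex_series_ext; [|exact (ex_series_scal_l (3 / 2) _ (ex_series_geom _ Hgeom))].
    intros n. change (3 / 2 * (1 / 2) ^ n =
      Rabs (weight (Z.of_nat n)) + Rabs (weight (- Z.of_nat n - 1)%Z)).
    rewrite !Rabs_pos_eq by apply weight_range. now rewrite Hpair.
  - rewrite (Series_ext _ _ Hpair), Series_scal_l, Series_geom by exact Hgeom. field.
Qed.

Lemma sqnorm_pt_coord (v : C * C) :
  sqnorm_pt v = coord 0 v ^ 2 + coord 1 v ^ 2 + coord 2 v ^ 2 + coord 3 v ^ 2.
Proof. unfold sqnorm_pt. rewrite !Cmod2_alt. simpl. ring. Qed.

Lemma sqnorm_pt_nonneg (v : C * C) : 0 <= sqnorm_pt v.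
Proof.
  unfold sqnorm_pt. pose proof (pow2_ge_0 (Cmod (fst v))). pose proof (pow2_ge_0 (Cmod (snd v))). lra.
Qed.

Lemma Rabs_coord_le_l2norm (r : vec) (m : Z) (i : nat) :
  in_l2 r -> Rabs (coord i (r m)) <= l2norm r.
Proof.
  intros Hr. unfold l2norm. rewrite <- sqrt_Rsqr_abs. apply sqrt_le_1_alt.
  apply Rle_trans with (sqnorm_pt (r m)).
  - rewrite Rsqr_pow2, sqnorm_pt_coord.
    pose proof (pow2_ge_0 (coord 0 (r m))). pose proof (pow2_ge_0 (coord 1 (r m))).
    pose proof (pow2_ge_0 (coord 2 (r m))). pose proof (pow2_ge_0 (coord 3 (r m))).
    destruct i as [|[|[|i]]]; simpl in *; lra.
  - apply (le_sumZ (fun n => sqnorm_pt (r n))); [intros; apply sqnorm_pt_nonneg | exact Hr].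
Qed.

Section WeightedKernel.

Variables (K : Z -> Z -> R) (B : R).
Hypothesis K_dominated : forall k m, Rabs (K k m) <= B * weight k * weight m.

Lemma weighted_row_sum (x : Z -> R) (N : R) (k : Z) :
  (forall m, Rabs (x m) <= N) ->
  abs_summableZ (fun m => K k m * x m) /\
  Rabs (sumZ (fun m => K k m * x m)) <= 3 * B * N * weight k.
Proof.
  intros Hx. destruct sumZ_weight as [Hw Hsum].
  destruct (sumZ_scal_l (B * weight k * N) weight Hw) as [Hsw Hsumw].
  destruct (sumZ_dominated (fun m => K k m * x m) (fun m => B * weight k * N * weight m))
    as [Hex Hle]; [|exact Hsw|].
  - intros m. rewrite Rabs_mult.
    replace (B * weight k * N * weight m) with ((B * weight k * weight m) * N) by ring.
    apply Rmult_le_compat; [apply Rabs_pos | apply Rabs_pos | apply K_dominated | apply Hx].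
  - split; [exact Hex|]. rewrite Hsumw, Hsum in Hle. lra.
Qed.

Lemma sqnorm_applyK_le (r : vec) (k : Z) : in_l2 r ->
  sqnorm_pt (applyK K r k) <= 36 * (B * l2norm r) ^ 2 * weight k.
Proof.
  intros Hr. set (N := l2norm r).
  pose proof (weight_range k) as Hwk.
  assert (Hi : forall i, sumZ (fun m => K k m * coord i (r m)) ^ 2 <= 9 * (B * N) ^ 2 * weight k).
  { intros i.
    destruct (weighted_row_sum (fun m => coord i (r m)) N k) as [_ Hle];
      [intros m; now apply Rabs_coord_le_l2norm|].
    rewrite <- pow2_abs. eapply Rle_trans.
    - apply pow_incr. split; [apply Rabs_pos | exact Hle].
    - assert (0 <= (B * N) ^ 2) by apply pow2_ge_0.
      assert (weight k ^ 2 <= weight k) by nra.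
      replace ((3 * B * N * weight k) ^ 2) with (9 * (B * N) ^ 2 * weight k ^ 2) by ring.
      apply Rmult_le_compat_l; nra. }
  rewrite sqnorm_pt_coord. unfold applyK.
  pose proof (Hi 0%nat). pose proof (Hi 1%nat). pose proof (Hi 2%nat). pose proof (Hi 3%nat).
  simpl coord in *. lra.
Qed.

Hypothesis B_nonneg : 0 <= B.

(* ||K r||^2 <= 36 (B ||r||)^2 * sumZ weight = 108 (B ||r||)^2 <= (11 B ||r||)^2 *)
Lemma opnorm_le_of_weighted_bound : opnorm_le K (11 * B).
Proof.
  intros r Hr. set (N := l2norm r).
  assert (HN : 0 <= N) by apply sqrt_pos.
  split; [intros k i _; apply (weighted_row_sum _ N); intros m; now apply Rabs_coord_le_l2norm|].
  destruct sumZ_weight as [Hw Hsum].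
  destruct (sumZ_scal_l (36 * (B * N) ^ 2) weight Hw) as [Hsw Hsumw].
  destruct (sumZ_dominated (fun k => sqnorm_pt (applyK K r k)) (fun k => 36 * (B * N) ^ 2 * weight k))
    as [Hex Hle]; [|exact Hsw|].
  { intros k. rewrite Rabs_pos_eq by apply sqnorm_pt_nonneg. now apply sqnorm_applyK_le. }
  split; [exact Hex|].
  rewrite Hsumw, Hsum in Hle.
  unfold l2norm at 1. rewrite <- (sqrt_pow2 (11 * B * N)) by (apply Rmult_le_pos; lra).
  apply sqrt_le_1_alt. pose proof (Rle_abs (sumZ (fun n => sqnorm_pt (applyK K r n)))).
  pose proof (pow2_ge_0 (B * N)). nra.
Qed.

End WeightedKernel.

Lemma Rabs_BesselJnat_le (n : nat) (L : R) : 0 <= L < 1 ->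
  Rabs (BesselJnat n (2 * L)) <= L ^ n / (1 - L ^ 2).
Proof.
  intros HL. assert (Hgeom : Rabs (L ^ 2) < 1) by (rewrite Rabs_pos_eq; nra).
  unfold BesselJnat.
  destruct (Series_dominated
    (fun m => (-1) ^ m / (INR (fact m) * INR (fact (m + n))) * (2 * L / 2) ^ (2 * m + n))
    (fun m => L ^ n * (L ^ 2) ^ m)) as [_ Hle].
  - intros m.
    assert (Hcoef : Rabs ((-1) ^ m / (INR (fact m) * INR (fact (m + n)))) <= 1).
    { pose proof (INR_fact_ge_1 m). pose proof (INR_fact_ge_1 (m + n)).
      unfold Rdiv. rewrite Rabs_mult, pow_1_abs, Rmult_1_l, Rabs_inv, Rabs_pos_eq by nra.
      rewrite <- Rinv_1. apply Rinv_le_contravar; nra. }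
    replace (2 * L / 2) with L by field.
    replace (L ^ (2 * m + n)) with (L ^ n * (L ^ 2) ^ m) by (rewrite pow_add, pow_mult; ring).
    assert (Hpos : 0 <= L ^ n * (L ^ 2) ^ m) by (apply Rmult_le_pos; apply pow_le; nra).
    rewrite Rabs_mult, (Rabs_pos_eq _ Hpos).
    pose proof (Rmult_le_compat_r _ _ _ Hpos Hcoef). lra.
  - exact (ex_series_scal_l (L ^ n) _ (ex_series_geom _ Hgeom)).
  - rewrite Series_scal_l, Series_geom in Hle by exact Hgeom. exact Hle.
Qed.

Lemma Rabs_BesselJ_le (k : Z) (L : R) : 0 <= L < 1 ->
  Rabs (BesselJ k (2 * L)) <= L ^ Z.abs_nat k / (1 - L ^ 2).
Proof.
  intros HL. destruct k; simpl; try now apply Rabs_BesselJnat_le.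
  rewrite Rabs_mult, pow_1_abs, Rmult_1_l. now apply Rabs_BesselJnat_le.
Qed.

Lemma Rabs_BesselJ_le_weight (k : Z) (L : R) : 0 <= L <= 1 / 2 ->
  Rabs (BesselJ k (2 * L)) <= 2 * weight k.
Proof.
  intros HL. eapply Rle_trans; [apply Rabs_BesselJ_le; lra|]. unfold weight.
  assert (L ^ Z.abs_nat k <= (1 / 2) ^ Z.abs_nat k) by (apply pow_incr; lra).
  assert (1 <= 2 * (1 - L ^ 2)) by nra.
  assert (0 <= (1 / 2) ^ Z.abs_nat k) by (apply pow_le; lra).
  apply Rle_div_l; [nra|]. nra.
Qed.

Lemma KBe_le (L : R) (k : Z) : 0 <= L < 1 ->
  0 <= KBe L k <= Series (fun j => (L ^ 2) ^ Z.abs_nat (k + 1 + Z.of_nat j)) / (1 - L ^ 2) ^ 2.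
Proof.
  intros HL. assert (Hx : 0 < 1 - L ^ 2) by nra.
  destruct (Series_pow_abs_shift (L ^ 2) (k + 1)) as [Hex _]; [nra|].
  destruct (Series_dominated (fun j => BesselJ (k + Z.of_nat j + 1) (2 * L) ^ 2)
    (fun j => / (1 - L ^ 2) ^ 2 * (L ^ 2) ^ Z.abs_nat (k + 1 + Z.of_nat j)))
    as [Hexsq Hle].
  - intros j. rewrite Rabs_pos_eq by apply pow2_ge_0.
    replace (k + Z.of_nat j + 1)%Z with (k + 1 + Z.of_nat j)%Z by ring.
    set (n := (k + 1 + Z.of_nat j)%Z).
    pose proof (Rabs_BesselJ_le n L HL) as HJ.
    assert (0 <= L ^ Z.abs_nat n / (1 - L ^ 2)) by (apply Rdiv_le_0_compat; [apply pow_le|]; lra).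
    rewrite <- pow2_abs. eapply Rle_trans.
    + apply pow_incr. split; [apply Rabs_pos | exact HJ].
    + right. rewrite <- pow_mult, Nat.mul_comm, pow_mult. field. lra.
  - exact (ex_series_scal_l _ _ Hex).
  - unfold KBe. split.
    + apply Series_nonneg; [intros; apply pow2_ge_0 | exact Hexsq].
    + rewrite Series_scal_l in Hle. unfold Rdiv. rewrite (Rmult_comm (Series _)).
      eapply Rle_trans; [apply Rle_abs | exact Hle].
Qed.

Lemma KBe_le_all (L : R) (k : Z) : 0 <= L < 1 ->
  KBe L k <= (1 + L ^ 2) / (1 - L ^ 2) ^ 3.
Proof.
  intros HL. pose proof (KBe_le L k HL) as [_ HK].
  destruct (Series_pow_abs_shift (L ^ 2) (k + 1)) as [_ HS]; [nra|].
  eapply Rle_trans; [exact HK|].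
  replace ((1 + L ^ 2) / (1 - L ^ 2) ^ 3) with ((1 + L ^ 2) / (1 - L ^ 2) / (1 - L ^ 2) ^ 2)
    by (field; nra).
  apply Rmult_le_compat_r; [apply Rlt_le, Rinv_0_lt_compat, pow_lt; nra | exact HS].
Qed.

Lemma KBe_le_nonneg_index (L : R) (k : Z) : 0 <= L < 1 -> (0 <= k)%Z ->
  KBe L k <= L ^ 2 / (1 - L ^ 2) ^ 3.
Proof.
  intros HL Hk. pose proof (KBe_le L k HL) as [_ HK].
  destruct (Series_pow_abs_shift_pos (L ^ 2) (k + 1)) as [_ HS]; [nra | lia |].
  eapply Rle_trans; [exact HK|].
  replace (L ^ 2 / (1 - L ^ 2) ^ 3) with (L ^ 2 / (1 - L ^ 2) / (1 - L ^ 2) ^ 2)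
    by (field; nra).
  apply Rmult_le_compat_r; [apply Rlt_le, Rinv_0_lt_compat, pow_lt; nra | exact HS].
Qed.

(* [sigma (- i - t - 2)] codes sigma(-(i+1) - s), the value in the (i+1)-st factor of Q^0_sigma(s). *)
Lemma Q0partial_factor_lt_1 (sigma : Z -> R) (t : Z) :
  (forall n, 0 <= sigma n <= 1) ->
  Rbar_lt 0 (Lim_seq (Q0partial sigma t)) ->
  forall i : nat, sigma (- Z.of_nat i - t - 2)%Z < 1.
Proof.
  intros Hsigma HQ i.
  destruct (Rlt_le_dec (sigma (- Z.of_nat i - t - 2)%Z) 1) as [|Hge]; [assumption|].
  exfalso.
  assert (Hvanish : forall d, Q0partial sigma t (S i + d) = 0).
  { induction d as [|d IHd].
    - rewrite Nat.add_0_r.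
      change (Q0partial sigma t i * (1 - sigma (- Z.of_nat (S i) - t - 1)%Z) = 0).
      replace (- Z.of_nat (S i) - t - 1)%Z with (- Z.of_nat i - t - 2)%Z by lia.
      pose proof (Hsigma (- Z.of_nat i - t - 2)%Z).
      replace (sigma (- Z.of_nat i - t - 2)%Z) with 1 by lra. ring.
    - rewrite Nat.add_succ_r.
      change (Q0partial sigma t (S i + d) * (1 - sigma (- Z.of_nat (S (S i + d)) - t - 1)%Z) = 0).
      rewrite IHd. ring. }
  rewrite (Lim_seq_ext_loc _ (fun _ => 0)), Lim_seq_const in HQ.
  - simpl in HQ. lra.
  - exists (S i). intros n Hn. replace n with (S i + (n - S i))%nat by lia. apply Hvanish.
Qed.

Lemma sigma_bounded_away (sigma : Z -> R) (t : Z) :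
  (forall n, 0 <= sigma n <= 1) ->
  ex_series (fun m : nat => sigma (- Z.of_nat m - 1)%Z) ->
  Rbar_lt 0 (Lim_seq (Q0partial sigma t)) ->
  exists eta, 0 < eta <= 1 / 2 /\ forall n, (n <= - t - 2)%Z -> sigma n <= 1 - eta.
Proof.
  intros Hsigma Hsum HQ.
  set (u := fun i : nat => sigma (- Z.of_nat i - t - 2)%Z).
  assert (Hlim : is_lim_seq u 0).
  { pose proof (ex_series_lim_0 _ Hsum) as Hlim.
    destruct (Z_le_gt_dec 0 (t + 1)) as [Ht | Ht].
    - apply (is_lim_seq_incr_n _ (Z.to_nat (t + 1))) in Hlim.
      eapply is_lim_seq_ext; [|exact Hlim]. intros i. unfold u. f_equal. lia.
    - apply (is_lim_seq_incr_n _ (Z.to_nat (- t - 1))).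
      eapply is_lim_seq_ext; [|exact Hlim]. intros i. unfold u. f_equal. lia. }
  destruct (bounded_away_from_1 u (Q0partial_factor_lt_1 sigma t Hsigma HQ) Hlim)
    as [eta [Heta Hu]].
  exists eta. split; [exact Heta|]. intros n Hn.
  specialize (Hu (Z.to_nat (- n - t - 2))). unfold u in Hu.
  replace (- Z.of_nat (Z.to_nat (- n - t - 2)) - t - 2)%Z with n in Hu by lia. exact Hu.
Qed.

Section KernelEstimates.

Variables (sigma : Z -> R) (t : Z) (eta L : R).
Hypothesis sigma_range : forall n, 0 <= sigma n <= 1.
Hypothesis eta_range : 0 < eta <= 1 / 2.
Hypothesis sigma_below : forall n, (n <= - t - 2)%Z -> sigma n <= 1 - eta.
Hypothesis L_range : 0 <= L <= eta / 16.

Lemma one_sub_Ms_ge (m : Z) : eta / 2 <= 1 - Ms sigma t L m.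
Proof.
  unfold Ms, sig_shift. set (s := sigma (m - t - 1)%Z).
  assert (Hs : 0 <= s <= 1) by apply sigma_range.
  assert (HL : 0 <= L < 1) by lra.
  assert (Hx : 0 <= L ^ 2 <= L) by nra.
  assert (Hcube : 1 - 3 * L ^ 2 <= (1 - L ^ 2) ^ 3) by nra.
  assert (Hcube_pos : 0 < (1 - L ^ 2) ^ 3) by (apply pow_lt; nra).
  destruct (KBe_le L m HL) as [HK0 _].
  destruct (Z_le_gt_dec 0 m) as [Hm | Hm].
  - pose proof (KBe_le_nonneg_index L m HL Hm) as HK.
    assert (L ^ 2 / (1 - L ^ 2) ^ 3 <= 1 / 2) by (apply Rle_div_l; nra).
    assert (s * KBe L m <= KBe L m) by nra. lra.
  - pose proof (KBe_le_all L m HL) as HK.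
    assert (Hsm : s <= 1 - eta) by (apply sigma_below; lia).
    assert ((1 - eta) * ((1 + L ^ 2) / (1 - L ^ 2) ^ 3) <= 1 - eta / 2).
    { rewrite Rmult_div_assoc. apply Rle_div_l; [lra|]. nra. }
    assert (s * KBe L m <= (1 - eta) * KBe L m) by nra.
    assert ((1 - eta) * KBe L m <= (1 - eta) * ((1 + L ^ 2) / (1 - L ^ 2) ^ 3)) by nra.
    lra.
Qed.

Lemma fhat_bound (k : Z) :
  Rabs (fst (fhat sigma t L k)) <= 2 * weight k /\
  Rabs (snd (fhat sigma t L k)) <= L * (4 * weight k).
Proof.
  assert (HL : 0 <= L <= 1 / 2) by lra.
  assert (Hs : Rabs (sig_shift sigma t k) <= 1)
    by (unfold sig_shift; rewrite Rabs_pos_eq; apply sigma_range).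
  pose proof (Rabs_BesselJ_le_weight k L HL).
  pose proof (Rabs_BesselJ_le_weight (k + 1) L HL). pose proof (weight_succ_le k).
  unfold fhat; simpl; split.
  - replace (2 * weight k) with (1 * (2 * weight k)) by ring. now apply Rabs_mult_le.
  - replace (L * (4 * weight k)) with (1 * (L * (4 * weight k))) by ring.
    apply Rabs_mult_le; [assumption|].
    apply Rabs_mult_le; [rewrite Rabs_pos_eq | ]; lra.
Qed.

Lemma ghat_bound (m : Z) :
  Rabs (fst (ghat sigma t L m)) <= 2 / eta * (L * (4 * weight m)) /\
  Rabs (snd (ghat sigma t L m)) <= 2 / eta * (2 * weight m).
Proof.
  assert (HL : 0 <= L <= 1 / 2) by lra.
  assert (Hg : Rabs (/ (1 - Ms sigma t L m)) <= 2 / eta).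
  { pose proof (one_sub_Ms_ge m). rewrite Rabs_inv, Rabs_pos_eq by lra.
    replace (2 / eta) with (/ (eta / 2)) by (field; lra). apply Rinv_le_contravar; lra. }
  pose proof (Rabs_BesselJ_le_weight m L HL).
  pose proof (Rabs_BesselJ_le_weight (m + 1) L HL). pose proof (weight_succ_le m).
  unfold ghat; simpl; split; apply Rabs_mult_le; try assumption.
  - apply Rabs_mult_le; [rewrite Rabs_pos_eq | ]; lra.
  - now rewrite Rabs_Ropp.
Qed.

Lemma Rabs_Dker_le (k m : Z) :
  Rabs (Dker sigma t L k m) <= 32 / eta * L * weight k * weight m.
Proof.
  pose proof (weight_range k). pose proof (weight_range m).
  assert (HB : 0 <= 32 / eta * L) by (apply Rmult_le_pos; [apply Rlt_le, Rdiv_lt_0_compat|]; lra).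
  assert (0 <= 32 / eta * L * weight k * weight m) by (apply Rmult_le_pos; [apply Rmult_le_pos|]; lra).
  unfold Dker. destruct (Z.eqb_spec k m) as [_ | Hkm].
  { now rewrite Rabs_R0. }
  assert (Hdist : 1 <= Rabs (IZR (k - m))) by (rewrite Rabs_Zabs; apply IZR_le; lia).
  destruct (fhat_bound k) as [Hf1 Hf2]. destruct (ghat_bound m) as [Hg1 Hg2].
  rewrite Rabs_div by (intros Hz; rewrite Hz, Rabs_R0 in Hdist; lra).
  apply Rle_div_l; [lra|].
  eapply Rle_trans; [apply Rabs_triang|].
  pose proof (Rabs_mult_le _ _ _ _ Hg1 Hf1). pose proof (Rabs_mult_le _ _ _ _ Hg2 Hf2).
  replace (32 / eta * L * weight k * weight m)
    with (2 / eta * (L * (4 * weight m)) * (2 * weight k)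
          + 2 / eta * (2 * weight m) * (L * (4 * weight k)))
    in * by (field; lra).
  nra.
Qed.

End KernelEstimates.

Theorem proposition5p1 (sigma : Z -> R) (t : Z) :
  (forall n : Z, 0 <= sigma n <= 1) ->
  (* sum_{l in Z', l < 0} sigma(l) < oo ; l = n + 1/2 < 0 iff n <= -1 *)
  ex_series (fun m : nat => sigma (- Z.of_nat m - 1)%Z) ->
  (* Q^0_sigma(s) = prod_{i>=1} (1 - sigma(-i-s)) > 0 *)
  Rbar_lt (Finite 0) (Lim_seq (Q0partial sigma t)) ->
  exists Lstar c : R, 0 < Lstar /\ 0 < c /\
    forall L : R, 0 <= L < Lstar -> opnorm_le (Dker sigma t L) (c * L).
Proof.
  intros Hsigma Hsum HQ.
  destruct (sigma_bounded_away sigma t Hsigma Hsum HQ) as [eta [Heta Hbelow]].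
  assert (Hc : 0 < 32 / eta) by (apply Rdiv_lt_0_compat; lra).
  exists (eta / 16), (11 * (32 / eta)).
  split; [lra|]. split; [lra|].
  intros L HL. rewrite Rmult_assoc.
  apply opnorm_le_of_weighted_bound.
  - intros k m. apply (Rabs_Dker_le sigma t eta L); auto; lra.
  - apply Rmult_le_pos; lra.
Qed.
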